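(* Let $N\ge2$, $\mathcal N=\{1,\dots,N\}$, $\mathcal F=\{(i,j):i<j\}$, $B,M_1,\dots,M_N\in\mathbb Z_{\ge0}$, $p_1,\dots,p_N\in[0,1]$, $p_{\mathrm{swap}}\in[0,1]$, $\Delta t_{\mathrm{mem}}>0$. Let $\mathcal C=\prod_{i}\{0,1,\dots,M_i\}$ with probability mass function $\pi(c)=\prod_i\binom{M_i}{c_i}p_i^{c_i}(1-p_i)^{M_i-c_i}$. For $c\in\mathcal C$ let $\mathcal Y(c)=\{y\in\mathbb Z_{\ge0}^{\mathcal F}: \sum_{j<i}y_{ji}+\sum_{j>i}y_{ij}\le c_i\ \forall i,\ \sum_{(i,j)\in\mathcal F}y_{ij}\le B\}$. Define $$\Lambda_{\mathrm{mem}}=\Big\{\lambda\in\mathbb R_{\ge0}^{\mathcal F}:\ \exists\, v \text{ with } v(c)\in\mathrm{co}\,\mathcal Y(c)\ \forall c\in\mathcal C,\ \lambda=\frac{p_{\mathrm{swap}}}{\Delta t_{\mathrm{mem}}}\sum_{c\in\mathcal C}\pi(c)v(c)\Big\}.$$ Then $$\max_{\lambda\in\Lambda_{\mathrm{mem}}}\sum_{(i,j)\in\mathcal F}\lambda_{ij}=\frac{p_{\mathrm{swap}}}{\Delta t_{\mathrm{mem}}}\sum_{c\in\mathcal C}\pi(c)\,\min\Big\{B,\ \Big\lfloor\tfrac12\sum_i c_i\Big\rfloor,\ \sum_i c_i-\max_i c_i\Big\}.$$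
   Context: This models a memory-equipped (herald-then-swap) quantum switch: $c_i$ is the number of the $M_i$ switch memories dedicated to client $i$ that hold a successful link-level entangled pair in a slot (each independently with probability $p_i$), $v(c)$ is the expected BSM-pairing vector chosen by a stationary randomized scheduling rule upon observing $c$, $p_{\mathrm{swap}}$ the success probability of each swap, and $\Delta t_{\mathrm{mem}}$ the slot duration; $\mathrm{co}$ denotes convex hull. *)

From HB Require Import structures.
From mathcomp Require Import all_boot all_order all_algebra.
From mathcomp Require Import reals.
Set Implicit Arguments. Unset Strict Implicit. Unset Printing Implicit Defensive.
Import Order.TTheory GRing.Theory Num.Theory.
Local Open Scope ring_scope.

Definition fpair (N : nat) := {ij : 'I_N * 'I_N | (ij.1 < ij.2)%N}.

Definition config (N : nat) (M : 'I_N -> nat) :=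
  {dffun forall i : 'I_N, 'I_(M i).+1}.

Definition pmf_pi (R : realType) (N : nat) (M : 'I_N -> nat) (p : 'I_N -> R)
    (c : config M) : R :=
  \prod_(i < N) (('C(M i, c i))%:R * p i ^+ c i * (1 - p i) ^+ (M i - c i)).

Definition load (N : nat) (y : fpair N -> nat) (i : 'I_N) : nat :=
  (\sum_(f : fpair N | (val f).2 == i) y f + \sum_(f : fpair N | (val f).1 == i) y f)%N.

Definition Yset (N : nat) (M : 'I_N -> nat) (B : nat) (c : config M)
    (y : fpair N -> nat) : Prop :=
  (forall i : 'I_N, (load y i <= c i)%N) /\ (\sum_(f : fpair N) y f <= B)%N.

Definition convY (R : realType) (N : nat) (M : 'I_N -> nat) (B : nat)
    (c : config M) (x : fpair N -> R) : Prop :=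
  exists (n : nat) (w : 'I_n -> R) (ys : 'I_n -> fpair N -> nat),
    (forall k, Yset B c (ys k)) /\ (forall k, 0 <= w k) /\
    \sum_(k < n) w k = 1 /\
    (forall f, x f = \sum_(k < n) w k * (ys k f)%:R).

Definition Lambda_mem (R : realType) (N : nat) (M : 'I_N -> nat) (B : nat)
    (p : 'I_N -> R) (pswap dt : R) (lam : fpair N -> R) : Prop :=
  (forall f, 0 <= lam f) /\
  exists v : config M -> fpair N -> R,
    (forall c, convY B c (v c)) /\
    (forall f, lam f = pswap / dt * \sum_(c : config M) pmf_pi p c * v c f).

Definition opt_value (R : realType) (N : nat) (M : 'I_N -> nat) (B : nat)
    (p : 'I_N -> R) (pswap dt : R) : R :=
  pswap / dt * \sum_(c : config M)
    pmf_pi p c * (minn B (minn (\sum_(i < N) (c i : nat))%N./2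
                     ((\sum_(i < N) (c i : nat)) - \max_(i < N) (c i : nat))%N))%:R.

Arguments Lambda_mem {R N} M B p pswap dt lam.
Arguments opt_value {R N} M B p pswap dt.

From HB Require Import structures.
From mathcomp Require Import all_boot all_order all_algebra.
From mathcomp Require Import reals zify.
Import Order.TTheory GRing.Theory Num.Theory.

(* For a fixed configuration c, an integer pairing vector y is a multigraph on
   the clients with degree caps c_i.  Counting endpoints gives 2 |y| <= sum c, and
   every edge at i uses another client, so c_i + |y| <= sum c; hence |y| is at most
   min(floor(sum c / 2), sum c - max c).  Conversely, repeatedly pairing the two
   fullest clients realises every value up to that bound.  As the objective is
   linear and v(c) can be chosen independently for each c, the optimum picks an
   integral maximiser of min(B, .) in every configuration and averages over pi. *)

Lemma sum_nat_eq_pred1 (T : finType) (a : T) : (\sum_(x : T) (a == x) = 1)%N.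
Proof. by rewrite (bigD1 a) //= eqxx big1 // => x; rewrite eq_sym => /negbTE ->. Qed.

Section Pairing.

Context {N : nat}.
Implicit Types (y : fpair N -> nat) (d : 'I_N -> nat) (e : fpair N) (i j : 'I_N).

Definition incid e i : nat := (((val e).1 == i) + ((val e).2 == i))%N.

Definition pairing_bound d : nat :=
  minn (\sum_(i < N) d i)./2 (\sum_(i < N) d i - \max_(i < N) d i).

Lemma incid_le1 e i : (incid e i <= 1)%N.
Proof.
rewrite /incid; case: e => [[a b] /= ab].
by case: eqP => [<-|_]; case: eqP => // ea; move: ab; rewrite ea ltnn.
Qed.

Lemma sum_incid e : (\sum_(i < N) incid e i = 2)%N.
Proof.
by rewrite /incid big_split /= !sum_nat_eq_pred1.
Qed.

Lemma loadE y i : load y i = (\sum_e y e * incid e i)%N.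
Proof.
rewrite /load /incid; under [RHS]eq_bigr do rewrite mulnDr !mulnbr.
by rewrite big_split [RHS]addnC -!big_mkcond.
Qed.

Lemma sum_load y : (\sum_(i < N) load y i = 2 * \sum_e y e)%N.
Proof.
under [LHS]eq_bigr do rewrite loadE.
rewrite exchange_big big_distrr /=; apply: eq_bigr => e _.
by rewrite -big_distrr /= sum_incid mulnC.
Qed.

Lemma load_le_sum y i : (load y i <= \sum_e y e)%N.
Proof.
by rewrite loadE; apply: leq_sum => e _; rewrite -{2}[y e]muln1 leq_mul2l incid_le1 orbT.
Qed.

Lemma load_add_pair y e i :
  load (fun f => y f + (e == f))%N i = (load y i + incid e i)%N.
Proof.
rewrite !loadE (eq_bigr _ (fun f _ => mulnDl _ _ _)) big_split /=; congr (_ + _)%N.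
by rewrite (bigD1 e) //= eqxx mul1n big1 ?addn0 // => f; rewrite eq_sym => /negbTE ->.
Qed.

Lemma pairing_boundP k d :
  reflect ((2 * k <= \sum_(i < N) d i)%N /\ forall j, (d j + k <= \sum_(i < N) d i)%N)
          (k <= pairing_bound d)%N.
Proof.
rewrite /pairing_bound leq_min -divn2; apply: (iffP andP) => [[hS hM]|[hS hj]].
- split; first lia.
  move=> j; have : (d j <= \max_(i < N) d i)%N := leq_bigmax j.
  have : (d j <= \sum_(i < N) d i)%N by rewrite (bigD1 j) //= leq_addr.
  lia.
- have hM : (\max_(i < N) d i <= \sum_(i < N) d i - k)%N.
    by apply/bigmax_leqP => j _; have := hj j; lia.
  split; lia.
Qed.

Lemma sum_le_pairing_bound y d :
  (forall i, load y i <= d i)%N -> (\sum_e y e <= pairing_bound d)%N.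
Proof.
move=> hyd; have hS : (2 * \sum_e y e <= \sum_(i < N) d i)%N by rewrite -sum_load leq_sum.
apply/pairing_boundP; split=> // j.
rewrite (bigD1 j) //= leq_add2l.
apply: (@leq_trans (\sum_(i < N | i != j) load y i)); last exact: leq_sum.
have hsum := sum_load y; rewrite (bigD1 j) //= in hsum.
by rewrite -(leq_add2l (load y j)) hsum mul2n -addnn leq_add2r load_le_sum.
Qed.

Lemma exists_two_largest d :
  (0 < \sum_(i < N) d i)%N -> (forall j, d j < \sum_(i < N) d i)%N ->
  exists a b, [/\ a != b, (0 < d b)%N, forall j, (d j <= d a)%N
              & forall j, j != a -> (d j <= d b)%N].
Proof.
move=> hS hj.
have [i0 _|none] := pickP (fun i => 0 < d i)%N; last first.
  by move: hS; rewrite big1 // => i _; have /negbT := none i; rewrite -eqn0Ngt => /eqP.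
case: (arg_maxnP d (erefl true : xpredT i0)) => a _ ha.
have [i1 /andP[i1a i1pos]|none] := pickP (fun i => (i != a) && (0 < d i))%N; last first.
  have := hj a; rewrite (bigD1 a) //= big1 ?addn0 ?ltnn // => i ia.
  by have /negbT := none i; rewrite ia /= -eqn0Ngt => /eqP.
case: (@arg_maxnP _ i1 (fun j => j != a) d i1a) => b ba hb.
exists a, b; split=> //.
- by rewrite eq_sym.
- exact: leq_trans i1pos (hb _ i1a).
- by move=> j; apply: ha.
Qed.

Lemma exists_pair_incid {a b} :
  a != b -> exists e, forall i, incid e i = ((a == i) + (b == i))%N.
Proof.
move=> neq_ab; case: (ltngtP a b) => ab.
- by exists (exist _ (a, b) ab).
- by exists (exist _ (b, a) ab) => i; rewrite /incid addnC.
- by rewrite (val_inj ab) eqxx in neq_ab.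
Qed.

(* Removing one unit from each of two largest entries keeps the pairing bound above [k]. *)
Lemma pairing_bound_step {k d} : (k.+1 <= pairing_bound d)%N ->
  exists e d', (forall i, d i = d' i + incid e i)%N /\ (k <= pairing_bound d')%N.
Proof.
move=> /pairing_boundP [h2 hj].
have [a [b [ab db ha hb]]] : exists a b, [/\ a != b, (0 < d b)%N, forall j, (d j <= d a)%N
    & forall j, j != a -> (d j <= d b)%N].
  by apply: exists_two_largest => [|j]; [lia | have := hj j; lia].
have [e he] := exists_pair_incid ab.
pose d' j := (d j - incid e j)%N.
have hd i : d i = (d' i + incid e i)%N.
  rewrite /d' subnK // he.
  case: eqP => [<-|_]; case: eqP => [ba|_] //=.
  - by rewrite ba eqxx in ab.
  - exact: leq_trans db (ha b).
  - by rewrite -ba.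
exists e, d'; split=> //; clearbody d'.
have hS : (\sum_(i < N) d i = \sum_(i < N) d' i + 2)%N.
  by rewrite (eq_bigr _ (fun i _ => hd i)) big_split /= sum_incid.
rewrite hS in h2 hj.
apply/pairing_boundP; set S' := \sum_(i < N) d' i in h2 hj *; split; first lia.
move=> j; have := hd j; rewrite he.
case: (eqVneq a j) => [<-|ja]; first by rewrite eq_sym (negbTE ab); have := hj a; lia.
case: (eqVneq b j) => [<-|jb]; first by have := hj b; lia.
move=> /= dj.
have [lt|ge] := ltnP (d j) (d a); first by have := hj a; lia.
have djb : (d j <= d b)%N by rewrite hb // eq_sym.
have three : (d a + d b + d j <= \sum_(i < N) d i)%N.
  rewrite (bigD1 a) // (bigD1 b) /=; last by rewrite eq_sym.
  rewrite (bigD1 j) /=; last by rewrite ![j == _]eq_sym ja jb.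
  by rewrite !addnA leq_addr.
rewrite hS in three; have := ha j; lia.
Qed.

Lemma exists_load_le {k d} : (k <= pairing_bound d)%N ->
  exists y, (forall i, load y i <= d i)%N /\ \sum_e y e = k.
Proof.
elim: k d => [|k IH] d hk.
  by exists (fun _ => 0%N); split=> [i|]; rewrite ?loadE big1.
have [e [d' [hd hk']]] := pairing_bound_step hk.
have [y [hy <-]] := IH d' hk'.
exists (fun f => y f + (e == f))%N; split.
  by move=> i; rewrite load_add_pair hd leq_add2r.
by rewrite big_split /= sum_nat_eq_pred1 addn1.
Qed.

End Pairing.

Local Open Scope ring_scope.

Lemma sum_scaled_mixture (R : comPzRingType) (I J : finType) (k : R) (w : I -> R)
    (v : I -> J -> R) :
  \sum_j (k * \sum_i w i * v i j) = k * \sum_i w i * \sum_j v i j.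
Proof.
rewrite -mulr_sumr exchange_big /=; congr (_ * _).
by apply: eq_bigr => i _; rewrite mulr_sumr.
Qed.

Section Capacity.

Context {R : realType} {N : nat} {M : 'I_N -> nat} (B : nat).
Implicit Types (c : config M) (y : fpair N -> nat).

Definition max_pairings c : nat := minn B (pairing_bound (fun i => c i : nat)).

Lemma Yset_sum_le c y : Yset B c y -> (\sum_f y f <= max_pairings c)%N.
Proof. by move=> [hload hB]; rewrite leq_min hB sum_le_pairing_bound. Qed.

Lemma exists_Yset_max c : exists y, Yset B c y /\ \sum_f y f = max_pairings c.
Proof.
have [y [hload hsum]] := exists_load_le (geq_minr B (pairing_bound (fun i => c i : nat))).
by exists y; rewrite hsum; split=> //; split=> //; rewrite hsum geq_minl.
Qed.

Lemma Yset_convY c y : Yset B c y -> convY (R := R) B c (fun f => (y f)%:R).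
Proof.
move=> hy; exists 1%N, (fun=> 1), (fun=> y).
split=> //; split=> [_|]; first exact: ler01.
by split=> [|f]; rewrite big_ord1 ?mul1r.
Qed.

Lemma convY_sum_le c (x : fpair N -> R) :
  convY B c x -> \sum_f x f <= (max_pairings c)%:R.
Proof.
move=> [n [w [ys [hY [hw [hw1 hx]]]]]].
rewrite (eq_bigr _ (fun f _ => hx f)) exchange_big /=.
have -> : (max_pairings c)%:R = \sum_k w k * (max_pairings c)%:R :> R.
  by rewrite -mulr_suml hw1 mul1r.
apply: ler_sum => k _; rewrite -mulr_sumr -natr_sum ler_wpM2l // ler_nat.
exact: Yset_sum_le.
Qed.

End Capacity.

Lemma pmf_pi_ge0 (R : realType) (N : nat) (M : 'I_N -> nat) (p : 'I_N -> R)
    (c : config M) :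
  (forall i, 0 <= p i <= 1) -> 0 <= pmf_pi p c.
Proof.
move=> hp; apply: prodr_ge0 => i _; have /andP[p0 p1] := hp i.
by rewrite !mulr_ge0 ?exprn_ge0 ?subr_ge0.
Qed.

Theorem mainTheorem3 (R : realType) (N : nat) (hN : (2 <= N)%N)
  (B : nat) (M : 'I_N -> nat) (p : 'I_N -> R)
  (hp : forall i, 0 <= p i <= 1)
  (pswap dt : R) (hps : 0 <= pswap <= 1) (hdt : 0 < dt) :
  (exists lam : fpair N -> R, Lambda_mem M B p pswap dt lam /\
      \sum_(f : fpair N) lam f = opt_value M B p pswap dt) /\
  (forall lam : fpair N -> R, Lambda_mem M B p pswap dt lam ->
      \sum_(f : fpair N) lam f <= opt_value M B p pswap dt).
Proof.
have rate_ge0 : 0 <= pswap / dt by case/andP: hps => ps0 _; rewrite divr_ge0 // ltW.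
have opt_valueE : opt_value M B p pswap dt =
    pswap / dt * \sum_(c : config M) pmf_pi p c * (max_pairings B c)%:R by [].
split.
  have [ystar hystar] := fin_all_exists (exists_Yset_max B (M := M)).
  pose v c f := ((ystar c f)%:R : R).
  exists (fun f => pswap / dt * \sum_c pmf_pi p c * v c f); split.
    split=> [f|]; last by exists v; split=> // c; apply/Yset_convY/(hystar c).1.
    by rewrite mulr_ge0 ?sumr_ge0 // => c _; rewrite mulr_ge0 ?pmf_pi_ge0.
  rewrite sum_scaled_mixture opt_valueE; congr (_ * _); apply: eq_bigr => c _.
  by rewrite -natr_sum (hystar c).2.
move=> lam [_ [v [hv hlam]]].
rewrite (eq_bigr _ (fun f _ => hlam f)) sum_scaled_mixture opt_valueE.
rewrite ler_wpM2l // ler_sum // => c _.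
by rewrite ler_wpM2l ?pmf_pi_ge0 ?convY_sum_le.
Qed.
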